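(* Let $\tau\in(0,\frac{\pi}{4})\cup(\frac{\pi}{4},\frac{\pi}{2})$, $a=\cot\tau$, $b=\sqrt{|\cot^2\tau-1|}$, and let $F=F_\tau$ be defined on symmetric matrices with eigenvalues $\lambda_1\le\dots\le\lambda_n$ by $F_\tau=\sum_i\ln\big(\frac{\lambda_i+a-b}{\lambda_i+a+b}\big)$ if $0<\tau<\frac{\pi}{4}$ and $F_\tau=\sum_i\arctan\big(\frac{\lambda_i+a-b}{\lambda_i+a+b}\big)$ if $\frac{\pi}{4}<\tau<\frac{\pi}{2}$. Then $F_\tau$ satisfies all of the following: (i) $F_\tau$ is monotonically increasing in each $\lambda_i$ (so $\partial F_\tau/\partial\lambda_i>0$) and is a symmetric function of $(\lambda_1,\dots,\lambda_n)$, i.e. invariant under interchange of any two eigenvalues; (ii) for any $\mu_1>0,\mu_2>0$ there exist positive constants $\lambda,\Lambda$ depending only on $\mu_1,\mu_2$ (and $\tau,n$) such that for every $(\lambda_1,\dots,\lambda_n)\in\Gamma^+_{]\mu_1,\mu_2[}$, $$\Lambda\ge\sum_{i=1}^n\frac{\partial F_\tau}{\partial\lambda_i}\ge\lambda\qquad\text{and}\qquad \Lambda\ge\sum_{i=1}^n\frac{\partial F_\tau}{\partial\lambda_i}\lambda_i^2\ge\lambda;$$ (iii) both $F_\tau(A)$ and $F_\tau^*(A):=-F_\tau(A^{-1})$ are concave on the cone $\Gamma_+$ of positive definite symmetric matrices; (iv) there exist functions $f_1,f_2$, monotonically increasing on $(0,+\infty)$, with $f_1(\lambda_1)\le F_\tau(\lambda_1,\dots,\lambda_n)\le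 f_2(\lambda_n)$ for all $0\le\lambda_1\le\dots\le\lambda_n$ (for which $F_\tau$ is defined), and such that for every $\Phi,\Psi\in\mathcal{L}$ there exist $t_1>0$ and $t_2>0$ with: every $t>0$ satisfying $f_1(t)\le\Phi$ has $t\le t_1$, and every $t>0$ satisfying $f_2(t)\ge\Psi$ has $t\ge t_2$.
   Context: $\Gamma^+_{]\mu_1,\mu_2[}=\{(\lambda_1,\dots,\lambda_n):0\le\lambda_1\le\lambda_2\le\dots\le\lambda_n,\ \lambda_1\le\mu_1,\ \lambda_n\ge\mu_2\}$. $\mathcal{L}=\{\Upsilon:\ \exists\,0<\lambda_1\le\dots\le\lambda_n\text{ with }\Upsilon=F_\tau(\lambda_1,\dots,\lambda_n)\}$, the set of values of $F_\tau$ on positive eigenvalue vectors. $F_\tau(A)$ for a symmetric matrix means $F_\tau$ evaluated at its ordered eigenvalues. *)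

(* classical reals (ln, atan, derivatives). Matrices are
   hand-rolled as functions nat -> nat -> R restricted to indices < n. *)
From Stdlib Require Import Reals Lra Lia.
Open Scope R_scope.

Fixpoint rsum (n : nat) (f : nat -> R) : R :=
  match n with O => 0 | S m => rsum m f + f m end.

Definition a_tau (tau : R) : R := cos tau / sin tau.
Definition b_tau (tau : R) : R := sqrt (Rabs (a_tau tau ^ 2 - 1)).

Definition g_tau (tau x : R) : R :=
  let a := a_tau tau in let b := b_tau tau in
  if Rlt_dec tau (PI / 4) then ln ((x + a - b) / (x + a + b))
  else atan ((x + a - b) / (x + a + b)).

Definition F_tau (tau : R) (n : nat) (lam : nat -> R) : R :=
  rsum n (fun i => g_tau tau (lam i)).

Definition upd (lam : nat -> R) (i : nat) (x : R) : nat -> R :=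
  fun j => if Nat.eq_dec j i then x else lam j.

Definition swap (lam : nat -> R) (i j : nat) : nat -> R :=
  fun k => if Nat.eq_dec k i then lam j else if Nat.eq_dec k j then lam i else lam k.

Definition partial_F (tau : R) (n : nat) (lam : nat -> R) (i : nat) (d : R) : Prop :=
  derivable_pt_lim (fun x => F_tau tau n (upd lam i x)) (lam i) d.

Definition ordered (n : nat) (lam : nat -> R) : Prop :=
  forall i j, (i <= j)%nat -> (j < n)%nat -> lam i <= lam j.

(* Gamma^+_{]mu1,mu2[} (indices shifted: lam_1 = lam 0, lam_n = lam (n-1)) *)
Definition Gamma_mu (n : nat) (mu1 mu2 : R) (lam : nat -> R) : Prop :=
  ordered n lam /\ 0 <= lam 0%nat /\ lam 0%nat <= mu1 /\ mu2 <= lam (n - 1)%nat.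

Definition L_set (tau : R) (n : nat) (Y : R) : Prop :=
  exists lam, ordered n lam /\ (forall i, (i < n)%nat -> 0 < lam i) /\ Y = F_tau tau n lam.

Definition mat := nat -> nat -> R.
Definition mmul (n : nat) (A B : mat) : mat := fun i j => rsum n (fun k => A i k * B k j).
Definition mtr (A : mat) : mat := fun i j => A j i.
Definition idm : mat := fun i j => if Nat.eq_dec i j then 1 else 0.
Definition diagm (lam : nat -> R) : mat := fun i j => if Nat.eq_dec i j then lam i else 0.
Definition meq (n : nat) (A B : mat) : Prop :=
  forall i j, (i < n)%nat -> (j < n)%nat -> A i j = B i j.
Definition msym (n : nat) (A : mat) : Prop :=
  forall i j, (i < n)%nat -> (j < n)%nat -> A i j = A j i.
Definition posdef (n : nat) (A : mat) : Prop :=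
  msym n A /\
  forall x : nat -> R, (exists i, (i < n)%nat /\ x i <> 0) ->
    0 < rsum n (fun i => rsum n (fun j => x i * A i j * x j)).
Definition orthogonal (n : nat) (Q : mat) : Prop := meq n (mmul n (mtr Q) Q) idm.
Definition eigvals (n : nat) (A : mat) (lam : nat -> R) : Prop :=
  ordered n lam /\
  exists Q, orthogonal n Q /\ meq n A (mmul n (mmul n Q (diagm lam)) (mtr Q)).
Definition minv (n : nat) (A B : mat) : Prop := meq n (mmul n A B) idm.
Definition mcomb (t : R) (A B : mat) : mat := fun i j => t * A i j + (1 - t) * B i j.

From Pilot Require Import Defs.
From Stdlib Require Import Reals Lra Lia FunctionalExtensionality.
From Coquelicot Require Import Coquelicot.
From mathcomp Require all_boot all_algebra Rstruct.
Open Scope R_scope.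

(* In both regimes the summand g = g_tau has derivative c / (x^2 + 2 a x + 1) on
   [0, +oo) for some c > 0: positive and decreasing, so g is increasing and
   concave, which gives (i), and (ii) and (iv) follow from the explicit form of
   g'.  The substitution y = 1/x leaves g'(x) dx invariant, so g(x) + g(1/x) is
   constant and F^*(A) = F(A) - const; hence (iii) reduces to the concavity of
   A |-> sum g(eigenvalues of A).  That in turn is Jensen's inequality: in the
   eigenbasis of t A + (1 - t) B the diagonal entries of A are averages of the
   eigenvalues of A with weights forming a doubly stochastic matrix. *)

Lemma rsum_ext n f g : (forall k, (k < n)%nat -> f k = g k) -> rsum n f = rsum n g.
Proof.
  induction n; simpl; intros Hfg; auto.
  rewrite IHn, Hfg; auto.
Qed.

Lemma rsum_le n f g : (forall k, (k < n)%nat -> f k <= g k) -> rsum n f <= rsum n g.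
Proof.
  induction n; simpl; intros Hfg; [lra|].
  assert (rsum n f <= rsum n g) by (apply IHn; intros; apply Hfg; lia).
  assert (f n <= g n) by (apply Hfg; lia). lra.
Qed.

Lemma rsum_plus n f g : rsum n (fun k => f k + g k) = rsum n f + rsum n g.
Proof. induction n; simpl; [lra|]. rewrite IHn. lra. Qed.

Lemma rsum_scal n c f : rsum n (fun k => c * f k) = c * rsum n f.
Proof. induction n; simpl; [lra|]. rewrite IHn. lra. Qed.

Lemma rsum_const n c : rsum n (fun _ => c) = INR n * c.
Proof. induction n; simpl rsum; [simpl; lra|]. rewrite IHn, S_INR. lra. Qed.

Lemma rsum_swap n m (f : nat -> nat -> R) :
  rsum n (fun i => rsum m (fun k => f i k)) = rsum m (fun k => rsum n (fun i => f i k)).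
Proof.
  induction n; simpl.
  - induction m; simpl; [lra|]. rewrite <- IHm. lra.
  - rewrite IHn, <- rsum_plus. reflexivity.
Qed.

Lemma rsum_nonneg n f : (forall k, (k < n)%nat -> 0 <= f k) -> 0 <= rsum n f.
Proof.
  intros Hf. replace 0 with (rsum n (fun _ => 0)) by (rewrite rsum_const; ring).
  apply rsum_le; auto.
Qed.

Lemma rsum_ge_term n f j : (forall k, (k < n)%nat -> 0 <= f k) -> (j < n)%nat -> f j <= rsum n f.
Proof.
  induction n; intros Hf Hj; [lia|]. simpl.
  destruct (Nat.eq_dec j n) as [->|Hjn].
  - assert (0 <= rsum n f) by (apply rsum_nonneg; intros; apply Hf; lia). lra.
  - assert (f j <= rsum n f) by (apply IHn; [intros; apply Hf|]; lia).
    assert (0 <= f n) by (apply Hf; lia). lra.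
Qed.

Lemma rsum_delta n c j : (j < n)%nat ->
  rsum n (fun k => (if Nat.eq_dec k j then 1 else 0) * c k) = c j.
Proof.
  induction n; intros Hj; [lia|]. simpl.
  destruct (Nat.eq_dec n j) as [->|Hnj].
  - rewrite (rsum_ext _ _ (fun _ => 0)), rsum_const; [ring|].
    intros k Hk. destruct (Nat.eq_dec k j); [lia|ring].
  - rewrite IHn by lia. ring.
Qed.

Lemma rsum_comp_upd (G : R -> R) n f j y : (j < n)%nat ->
  rsum n (fun k => G (upd f j y k)) = rsum n (fun k => G (f k)) - G (f j) + G y.
Proof.
  induction n; intros Hj; [lia|]. simpl. unfold upd at 2.
  destruct (Nat.eq_dec n j) as [<-|Hnj].
  - rewrite (rsum_ext n _ (fun k => G (f k))); [ring|].
    intros k Hk. unfold upd. destruct (Nat.eq_dec k n); [lia|auto].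
  - rewrite IHn by lia. ring.
Qed.

Lemma rsum_comp_swap (G : R -> R) n f i j : (i < n)%nat -> (j < n)%nat ->
  rsum n (fun k => G (swap f i j k)) = rsum n (fun k => G (f k)).
Proof.
  intros Hi Hj. destruct (Nat.eq_dec i j) as [<-|Hij].
  - apply rsum_ext. intros k _. unfold swap.
    destruct (Nat.eq_dec k i) as [->|]; reflexivity.
  - rewrite (rsum_ext n _ (fun k => G (upd (upd f i (f j)) j (f i) k))).
    + rewrite !rsum_comp_upd by auto. unfold upd.
      destruct (Nat.eq_dec j i); [lia|ring].
    + intros k _. unfold swap, upd.
      destruct (Nat.eq_dec k i), (Nat.eq_dec k j); subst; try lia; reflexivity.
Qed.

Lemma const_of_derivable_0 (f : R -> R) x y : x <= y ->
  (forall z, x <= z <= y -> derivable_pt_lim f z 0) -> f x = f y.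
Proof.
  intros Hxy Hf. destruct (Req_dec x y) as [->|Hne]; [reflexivity|].
  destruct (MVT_cor2 f (fun _ => 0) x y) as [z [Hz _]]; [lra|exact Hf|lra].
Qed.

Definition slope (a c x : R) : R := c / (x ^ 2 + 2 * a * x + 1).

Definition has_slope (g : R -> R) (a c : R) : Prop :=
  forall x, 0 <= x -> derivable_pt_lim g x (slope a c x).

Section Slope.
Variables a c : R.
Hypotheses (Ha : 0 < a) (Hc : 0 < c).

Lemma slope_den_ge1 x : 0 <= x -> 1 <= x ^ 2 + 2 * a * x + 1.
Proof. intros; nra. Qed.

Lemma slope_pos x : 0 <= x -> 0 < slope a c x.
Proof.
  intros Hx. pose proof (slope_den_ge1 x Hx). apply Rdiv_lt_0_compat; lra.
Qed.

Lemma slope_antitone x y : 0 <= x <= y -> slope a c y <= slope a c x.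
Proof.
  intros Hxy. pose proof (slope_den_ge1 x (proj1 Hxy)).
  unfold slope, Rdiv. apply Rmult_le_compat_l; [lra|].
  apply Rinv_le_contravar; nra.
Qed.

Lemma slope_le x : 0 <= x -> slope a c x <= c.
Proof.
  intros Hx. pose proof (slope_antitone 0 x (conj (Rle_refl 0) Hx)).
  unfold slope at 2 in H. replace (0 ^ 2 + 2 * a * 0 + 1) with 1 in H by ring. lra.
Qed.

Lemma slope_mul_sqr_le x : 0 <= x -> slope a c x * x ^ 2 <= c.
Proof.
  intros Hx. pose proof (slope_den_ge1 x Hx).
  unfold slope. apply (Rmult_le_reg_r (x ^ 2 + 2 * a * x + 1)); [lra|].
  field_simplify; [|lra].
  assert (0 <= c * x * a) by (repeat apply Rmult_le_pos; lra). lra.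
Qed.

Lemma slope_mul_sqr_mono x y : 0 <= x <= y -> slope a c x * x ^ 2 <= slope a c y * y ^ 2.
Proof.
  intros Hxy. set (Dx := x ^ 2 + 2 * a * x + 1). set (Dy := y ^ 2 + 2 * a * y + 1).
  assert (1 <= Dx) by apply (slope_den_ge1 x), Hxy.
  assert (1 <= Dy) by (apply slope_den_ge1; lra).
  apply (Rmult_le_reg_r (Dx * Dy)); [nra|].
  unfold slope; fold Dx Dy.
  replace (c / Dx * x ^ 2 * (Dx * Dy)) with (c * (x ^ 2 * Dy)) by (field; lra).
  replace (c / Dy * y ^ 2 * (Dx * Dy)) with (c * (y ^ 2 * Dx)) by (field; lra).
  apply Rmult_le_compat_l; [lra|]. unfold Dx, Dy.
  assert (0 <= a * x * y * (y - x)) by (repeat apply Rmult_le_pos; lra).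
  assert (x ^ 2 <= y ^ 2) by (apply pow_incr; lra).
  nra.
Qed.

Lemma slope_inv x : 0 < x -> slope a c (/ x) / x ^ 2 = slope a c x.
Proof.
  intros Hx. pose proof (slope_den_ge1 x (Rlt_le _ _ Hx)).
  unfold slope. field. split; [lra|nra].
Qed.

Variable g : R -> R.
Hypothesis Hg : has_slope g a c.

Lemma has_slope_lt x y : 0 <= x -> x < y -> g x < g y.
Proof.
  intros Hx Hxy.
  destruct (MVT_cor2 g (slope a c) x y Hxy) as [z [Hz1 Hz2]].
  { intros z Hz. apply Hg. lra. }
  assert (0 < slope a c z * (y - x)) by (apply Rmult_lt_0_compat; [apply slope_pos|]; lra).
  lra.
Qed.

Lemma has_slope_le x y : 0 <= x -> x <= y -> g x <= g y.
Proof.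
  intros Hx Hxy. destruct (Req_dec x y) as [->|]; [lra|].
  left; apply has_slope_lt; lra.
Qed.

(* The mean value theorem, with a slope no steeper than at x on [x, y] and no
   flatter on [y, x]. *)
Lemma has_slope_tangent x y : 0 <= x -> 0 <= y -> g y <= g x + slope a c x * (y - x).
Proof.
  intros Hx Hy. destruct (Rtotal_order x y) as [Hxy|[<-|Hxy]]; [| lra |].
  - destruct (MVT_cor2 g (slope a c) x y Hxy) as [z [Hz1 Hz2]].
    { intros z Hz. apply Hg. lra. }
    assert (slope a c z <= slope a c x) by (apply slope_antitone; lra).
    assert (slope a c z * (y - x) <= slope a c x * (y - x)) by (apply Rmult_le_compat_r; lra).
    lra.
  - destruct (MVT_cor2 g (slope a c) y x Hxy) as [z [Hz1 Hz2]].
    { intros z Hz. apply Hg. lra. }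
    assert (slope a c x <= slope a c z) by (apply slope_antitone; lra).
    assert (slope a c x * (x - y) <= slope a c z * (x - y)) by (apply Rmult_le_compat_r; lra).
    lra.
Qed.

Lemma has_slope_add_inv x : 0 < x -> g x + g (/ x) = 2 * g 1.
Proof.
  intros Hx.
  assert (Hd : forall z, 0 < z -> derivable_pt_lim (fun y => g y + g (/ y)) z 0).
  { intros z Hz.
    assert (Hinv : derivable_pt_lim (fun y => / y) z (- / z ^ 2)).
    { apply is_derive_Reals. auto_derive; [lra|]. field. lra. }
    pose proof (derivable_pt_lim_comp _ g _ _ _ Hinv
                  (Hg (/ z) (Rlt_le _ _ (Rinv_0_lt_compat _ Hz)))) as Hcomp.
    replace 0 with (slope a c z + slope a c (/ z) * - / z ^ 2)
      by (rewrite <- (slope_inv z Hz); field; lra).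
    exact (derivable_pt_lim_plus _ _ _ _ _ (Hg z (Rlt_le _ _ Hz)) Hcomp). }
  replace (2 * g 1) with (g 1 + g (/ 1)) by (rewrite Rinv_1; ring).
  destruct (Rle_lt_dec x 1).
  - apply (const_of_derivable_0 (fun y => g y + g (/ y))); auto.
    intros z Hz. apply Hd. lra.
  - symmetry. apply (const_of_derivable_0 (fun y => g y + g (/ y))); [lra|].
    intros z Hz. apply Hd. lra.
Qed.

End Slope.

Lemma ln_ratio_has_slope a b : 0 < b < a -> b * b = a * a - 1 ->
  has_slope (fun y => ln ((y + a - b) / (y + a + b))) a (2 * b).
Proof.
  intros Hb Hab x Hx. apply is_derive_Reals. auto_derive.
  - split; [lra|]. split; [|exact I].
    apply Rmult_lt_0_compat; [lra|]. apply Rinv_0_lt_compat; lra.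
  - unfold slope. replace (x ^ 2 + 2 * a * x + 1) with ((x + a - b) * (x + a + b)) by nra.
    field. lra.
Qed.

Lemma atan_ratio_has_slope a b : 0 < a -> 0 < b -> b * b = 1 - a * a ->
  has_slope (fun y => atan ((y + a - b) / (y + a + b))) a b.
Proof.
  intros Ha Hb Hab x Hx. apply is_derive_Reals. auto_derive; [lra|].
  unfold slope.
  replace (x ^ 2 + 2 * a * x + 1) with (((x + a - b) ^ 2 + (x + a + b) ^ 2) / 2) by nra.
  field. split; [nra|lra].
Qed.

Lemma a_tau_pos tau : 0 < tau < PI / 2 -> 0 < a_tau tau.
Proof.
  intros Ht. pose proof PI_RGT_0.
  apply Rdiv_lt_0_compat; [apply cos_gt_0|apply sin_gt_0]; lra.
Qed.

Lemma a_tau_inv_tan tau : 0 < tau < PI / 2 -> a_tau tau = / tan tau /\ 0 < tan tau.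
Proof.
  intros Ht. pose proof PI_RGT_0.
  assert (0 < sin tau) by (apply sin_gt_0; lra).
  assert (0 < cos tau) by (apply cos_gt_0; lra).
  split; unfold a_tau, tan; [field; lra | apply Rdiv_lt_0_compat; lra].
Qed.

Lemma a_tau_gt_1 tau : 0 < tau < PI / 4 -> 1 < a_tau tau.
Proof.
  intros Ht. pose proof PI_RGT_0.
  destruct (a_tau_inv_tan tau) as [-> Htan]; [lra|].
  assert (tan tau < 1) by (rewrite <- tan_PI4; apply tan_increasing; lra).
  rewrite <- Rinv_1. apply Rinv_lt_contravar; lra.
Qed.

Lemma a_tau_lt_1 tau : PI / 4 < tau < PI / 2 -> a_tau tau < 1.
Proof.
  intros Ht. pose proof PI_RGT_0.
  destruct (a_tau_inv_tan tau) as [-> Htan]; [lra|].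
  assert (1 < tan tau) by (rewrite <- tan_PI4; apply tan_increasing; lra).
  rewrite <- Rinv_1. apply Rinv_lt_contravar; lra.
Qed.

Lemma b_tau_sqr tau : b_tau tau * b_tau tau = Rabs (a_tau tau * a_tau tau - 1).
Proof. unfold b_tau. rewrite sqrt_sqrt by apply Rabs_pos. f_equal. ring. Qed.

Lemma g_tau_has_slope tau : 0 < tau < PI / 2 -> tau <> PI / 4 ->
  exists c, 0 < c /\ has_slope (g_tau tau) (a_tau tau) c.
Proof.
  intros Ht Ht4. pose proof (a_tau_pos tau Ht) as Ha. pose proof (b_tau_sqr tau) as Hb2.
  unfold has_slope, g_tau.
  destruct (Rlt_dec tau (PI / 4)) as [Hlt|Hge].
  - pose proof (a_tau_gt_1 tau (conj (proj1 Ht) Hlt)).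
    rewrite Rabs_right in Hb2 by nra.
    assert (0 < b_tau tau) by (apply sqrt_lt_R0, Rabs_pos_lt; nra).
    exists (2 * b_tau tau). split; [lra|].
    apply ln_ratio_has_slope; [split|]; [lra|nra|lra].
  - assert (Hgt : PI / 4 < tau).
    { apply Rnot_le_lt. intros [Hlt|Heq]; [exact (Hge Hlt)|exact (Ht4 Heq)]. }
    pose proof (a_tau_lt_1 tau (conj Hgt (proj2 Ht))).
    rewrite Rabs_left in Hb2 by nra.
    assert (0 < b_tau tau) by (apply sqrt_lt_R0, Rabs_pos_lt; nra).
    exists (b_tau tau). split; [lra|].
    apply atan_ratio_has_slope; lra.
Qed.

Definition quad_form (n : nat) (M : mat) (x : nat -> R) : R :=
  rsum n (fun p => rsum n (fun q => x p * M p q * x q)).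

Definition spectral_decomp (n : nat) (A Q : mat) (al : nat -> R) : Prop :=
  orthogonal n Q /\ meq n A (mmul n (mmul n Q (diagm al)) (mtr Q)).

Module MatrixAlgebra.
Import all_boot all_algebra Rstruct GRing.Theory.
Local Open Scope ring_scope.
Local Set Implicit Arguments.

Lemma rsum_big n (f : nat -> R) : rsum n f = \sum_(k < n) f k.
Proof. elim: n => [|n IH] /=; first by rewrite big_ord0. by rewrite big_ord_recr /= IH. Qed.

Definition mx n (M : mat) : 'M[R]_n := \matrix_(i < n, j < n) M i j.

Lemma meq_mx n A B : meq n A B <-> mx n A = mx n B.
Proof.
  split=> [H | H i j /ltP Hi /ltP Hj].
  - by apply/matrixP=> i j; rewrite !mxE; apply: H; apply/ltP.
  - have := congr1 (fun M : 'M[R]_n => M (Ordinal Hi) (Ordinal Hj)) H.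
    by rewrite /= !mxE.
Qed.

Lemma mx_mmul n A B : mx n (mmul n A B) = mx n A *m mx n B.
Proof. apply/matrixP=> i j; rewrite !mxE /mmul rsum_big; apply: eq_bigr => k _; by rewrite !mxE. Qed.

Lemma mx_mtr n A : mx n (mtr A) = (mx n A)^T.
Proof. by apply/matrixP=> i j; rewrite !mxE. Qed.

Lemma mx_diag n (f : nat -> R) (M : mat) :
  (forall i, M i i = f i) -> (forall i j, i <> j -> M i j = 0) ->
  mx n M = diag_mx (\row_(j < n) f j).
Proof.
  move=> Hdiag Hoff; apply/matrixP=> i j; rewrite !mxE.
  case: eqVneq => [-> | ne]; first by rewrite Hdiag.
  by rewrite Hoff // => e; move: ne; rewrite (val_inj e) eqxx.
Qed.

Lemma mx_idm n : mx n idm = 1%:M.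
Proof.
  rewrite (mx_diag n (fun=> 1)) => [|i|i j ne]; rewrite /idm.
  - by apply/matrixP=> i j; rewrite !mxE; case: (i == j).
  - by case: Nat.eq_dec.
  - by case: Nat.eq_dec.
Qed.

Lemma mx_diagm n lam : mx n (diagm lam) = diag_mx (\row_(j < n) lam j).
Proof.
  apply: mx_diag => [i | i j ne]; rewrite /diagm; by case: Nat.eq_dec.
Qed.

Lemma orthogonal_mx n Q : Defs.orthogonal n Q ->
  (mx n Q)^T *m mx n Q = 1%:M /\ mx n Q *m (mx n Q)^T = 1%:M.
Proof.
  move=> /meq_mx; rewrite mx_mmul mx_mtr mx_idm => HQ.
  by split; last exact: mulmx1C.
Qed.

Lemma spectral_decomp_mx n A Q al : spectral_decomp n A Q al ->
  mx n A = mx n Q *m diag_mx (\row_(j < n) al j) *m (mx n Q)^T.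
Proof. by move=> [_ /meq_mx]; rewrite !mx_mmul mx_diagm mx_mtr. Qed.

Lemma mx_change_basis n Q V : mx n (mmul n (mtr Q) V) = (mx n Q)^T *m mx n V.
Proof. by rewrite mx_mmul mx_mtr. Qed.

Lemma orthogonal_change_basis n Q V : Defs.orthogonal n Q -> Defs.orthogonal n V ->
  Defs.orthogonal n (mmul n (mtr Q) V) /\ Defs.orthogonal n (mtr (mmul n (mtr Q) V)).
Proof.
  move=> /orthogonal_mx [HQ1 HQ2] /orthogonal_mx [HV1 HV2].
  split; apply/meq_mx; rewrite mx_idm mx_mmul.
  - rewrite (mx_mtr n (mmul n (mtr Q) V)) mx_change_basis trmx_mul trmxK.
    by rewrite !mulmxA -(mulmxA _ (mx n Q)) HQ2 mulmx1 HV1.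
  - rewrite (mx_mtr n (mtr (mmul n (mtr Q) V))) (mx_mtr n (mmul n (mtr Q) V)) trmxK.
    by rewrite mx_change_basis trmx_mul trmxK !mulmxA -(mulmxA _ (mx n V)) HV2 mulmx1 HQ1.
Qed.

Lemma spectral_decomp_conj n A Q V al : spectral_decomp n A Q al ->
  meq n (mmul n (mmul n (mtr V) A) V)
        (mmul n (mmul n (mtr (mmul n (mtr Q) V)) (diagm al)) (mmul n (mtr Q) V)).
Proof.
  move=> /spectral_decomp_mx HA; apply/meq_mx.
  rewrite (mx_mmul n (mmul n (mtr V) A) V) (mx_mmul n (mtr V) A) (mx_mtr n V) HA.
  rewrite (mx_mmul n (mmul n (mtr (mmul n (mtr Q) V)) (diagm al)) (mmul n (mtr Q) V)).
  rewrite (mx_mmul n (mtr (mmul n (mtr Q) V)) (diagm al)) (mx_mtr n (mmul n (mtr Q) V)).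
  by rewrite mx_change_basis mx_diagm trmx_mul trmxK !mulmxA.
Qed.

Lemma spectral_decomp_inv n A Ai Q lam : spectral_decomp n Ai Q lam -> minv n A Ai ->
  spectral_decomp n A Q (fun k => / lam k).
Proof.
  move=> HAi HA; have [HQ _] := HAi; split=> //; apply/meq_mx.
  have [HQ1 HQ2] := orthogonal_mx HQ.
  move/meq_mx: HA; rewrite mx_mmul mx_idm (spectral_decomp_mx HAi) => HA.
  have Hnz (k : 'I_n) : lam k != 0.
    have := congr1 determinant HA; rewrite !det_mulmx det_tr det_diag det1 => Hd.
    have : \prod_(i < n) (\row_j lam j) 0 i != 0.
      by apply/eqP => H0; move: Hd; rewrite H0 mulr0 mul0r mulr0 => /eqP; rewrite eq_sym oner_eq0.
    by move/prodf_neq0 => /(_ k isT); rewrite mxE.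
  have HD : diag_mx (\row_j lam j) *m diag_mx (\row_(j < n) (/ lam j)%R) = 1%:M :> 'M[R]_n.
    apply/matrixP => i j; rewrite mul_diag_mx !mxE.
    case: (eqVneq i j) => [->|ne]; last by rewrite mulr0n mulr0.
    by rewrite mulr1n; apply: Rinv_r; apply/eqP; exact: Hnz.
  rewrite (mx_mmul n (mmul n Q (diagm (fun k => / lam k))) (mtr Q)).
  rewrite (mx_mmul n Q (diagm (fun k => / lam k))) (mx_mtr n Q) mx_diagm.
  have Hprod : mx n Q *m diag_mx (\row_j lam j) *m (mx n Q)^T *m
               (mx n Q *m diag_mx (\row_j (/ lam j)%R) *m (mx n Q)^T) = 1%:M.
    rewrite !mulmxA -(mulmxA _ (mx n Q)^T (mx n Q)) HQ1 mulmx1.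
    by rewrite -(mulmxA (mx n Q)) HD mulmx1 HQ2.
  by rewrite -[mx n A]mulmx1 -Hprod mulmxA HA mul1mx.
Qed.

End MatrixAlgebra.
Import MatrixAlgebra.

Lemma rsum_mul_r n f c : rsum n f * c = rsum n (fun k => f k * c).
Proof. rewrite Rmult_comm, <- rsum_scal. apply rsum_ext; intros; ring. Qed.

Lemma rsum_mul_diagm n f al k : (k < n)%nat ->
  rsum n (fun j => f j * diagm al j k) = f k * al k.
Proof.
  intros Hk. rewrite (rsum_ext _ _ (fun j => (if Nat.eq_dec j k then 1 else 0) * (f j * al j))).
  - apply rsum_delta, Hk.
  - intros j _. unfold diagm. destruct (Nat.eq_dec j k) as [->|]; ring.
Qed.

Lemma rsum_neq0 n f : rsum n f <> 0 -> exists p, (p < n)%nat /\ f p <> 0.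
Proof.
  induction n; simpl; intros Hf; [lra|].
  destruct (Req_dec (f n) 0) as [Hfn|Hfn].
  - destruct IHn as [p [Hp Hfp]]; [lra|]. exists p. split; [lia|assumption].
  - exists n. split; [lia|assumption].
Qed.

Lemma orthogonal_col_sqr n Q i : orthogonal n Q -> (i < n)%nat ->
  rsum n (fun p => Q p i * Q p i) = 1.
Proof.
  intros HQ Hi. pose proof (HQ i i Hi Hi) as H. unfold mmul, mtr, idm in H.
  destruct (Nat.eq_dec i i); [exact H|lia].
Qed.

Lemma orthogonal_col_neq0 n Q i : orthogonal n Q -> (i < n)%nat ->
  exists p, (p < n)%nat /\ Q p i <> 0.
Proof.
  intros HQ Hi. destruct (rsum_neq0 n (fun p => Q p i * Q p i)) as [p [Hp Hpi]].
  - rewrite orthogonal_col_sqr by assumption. lra.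
  - exists p. split; [assumption|]. intros E. apply Hpi. rewrite E. ring.
Qed.

Lemma quad_form_col n A Q V al i : (i < n)%nat -> spectral_decomp n A Q al ->
  quad_form n A (fun p => V p i) =
  rsum n (fun k => mmul n (mtr Q) V k i * al k * mmul n (mtr Q) V k i).
Proof.
  intros Hi HA. transitivity (mmul n (mmul n (mtr V) A) V i i).
  - unfold quad_form. rewrite rsum_swap. apply rsum_ext. intros q _.
    unfold mmul, mtr. rewrite rsum_mul_r. reflexivity.
  - rewrite (spectral_decomp_conj V HA Hi Hi).
    unfold mmul at 1. apply rsum_ext. intros k Hk.
    unfold mmul at 1. rewrite rsum_mul_diagm by assumption. reflexivity.
Qed.

Lemma quad_form_eigvec n A V ga i : (i < n)%nat -> spectral_decomp n A V ga ->
  quad_form n A (fun p => V p i) = ga i.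
Proof.
  intros Hi HA. rewrite (quad_form_col n A V V ga i Hi HA).
  rewrite (rsum_ext _ _ (fun k => (if Nat.eq_dec k i then 1 else 0) * ga k)).
  - apply rsum_delta, Hi.
  - intros k Hk. rewrite (proj1 HA k i Hk Hi). unfold idm.
    destruct (Nat.eq_dec k i); ring.
Qed.

Lemma posdef_quad_col n A V i : posdef n A -> orthogonal n V -> (i < n)%nat ->
  0 < quad_form n A (fun p => V p i).
Proof. intros [_ HA] HV Hi. apply HA, (orthogonal_col_neq0 n V i HV Hi). Qed.

Lemma spectral_decomp_pos n A Q al : posdef n A -> spectral_decomp n A Q al ->
  forall k, (k < n)%nat -> 0 < al k.
Proof.
  intros HA HQ k Hk. rewrite <- (quad_form_eigvec n A Q al k Hk HQ).
  apply posdef_quad_col; [assumption|apply HQ|assumption].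
Qed.

Lemma quad_form_comb n t A B x :
  quad_form n (mcomb t A B) x = t * quad_form n A x + (1 - t) * quad_form n B x.
Proof.
  unfold quad_form. rewrite <- !rsum_scal, <- rsum_plus. apply rsum_ext; intros p _.
  rewrite <- !rsum_scal, <- rsum_plus. apply rsum_ext; intros q _. unfold mcomb. ring.
Qed.

Lemma posdef_comb n t A B : posdef n A -> posdef n B -> 0 <= t <= 1 -> posdef n (mcomb t A B).
Proof.
  intros [SA PA] [SB PB] Ht. split.
  - intros i j Hi Hj. unfold mcomb. rewrite SA, SB by assumption. ring.
  - intros x Hx. pose proof (PA x Hx). pose proof (PB x Hx).
    pose proof (quad_form_comb n t A B x) as E. unfold quad_form in E. rewrite E.
    destruct (Req_dec t 0) as [->|]; nra.
Qed.

Section TraceConcavity.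
Variables g g' : R -> R.
Hypothesis g_tangent : forall x y, 0 <= x -> 0 <= y -> g y <= g x + g' x * (y - x).

Lemma jensen_doubly_stochastic n (S : nat -> nat -> R) (al av : nat -> R) :
  (forall k, (k < n)%nat -> 0 < al k) -> (forall i, (i < n)%nat -> 0 < av i) ->
  (forall i k, (i < n)%nat -> (k < n)%nat -> 0 <= S i k) ->
  (forall i, (i < n)%nat -> rsum n (fun k => S i k) = 1) ->
  (forall k, (k < n)%nat -> rsum n (fun i => S i k) = 1) ->
  (forall i, (i < n)%nat -> av i = rsum n (fun k => S i k * al k)) ->
  rsum n (fun k => g (al k)) <= rsum n (fun i => g (av i)).
Proof.
  intros Hal Hav HS Hrow Hcol Hav_def.
  apply Rle_trans with (rsum n (fun i => rsum n (fun k => S i k * g (al k)))).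
  - rewrite rsum_swap. apply Req_le, rsum_ext. intros k Hk.
    rewrite <- rsum_mul_r, Hcol by assumption. ring.
  - apply rsum_le. intros i Hi.
    apply Rle_trans with (rsum n (fun k =>
      g (av i) * S i k + g' (av i) * (S i k * al k) + - (g' (av i) * av i) * S i k)).
    + apply rsum_le. intros k Hk.
      pose proof (g_tangent (av i) (al k) (Rlt_le _ _ (Hav i Hi)) (Rlt_le _ _ (Hal k Hk))).
      pose proof (HS i k Hi Hk).
      replace (g (av i) * S i k + g' (av i) * (S i k * al k) + - (g' (av i) * av i) * S i k)
        with (S i k * (g (av i) + g' (av i) * (al k - av i))) by ring.
      apply Rmult_le_compat_l; assumption.
    + rewrite !rsum_plus, !rsum_scal, Hrow, <- Hav_def by assumption. lra.
Qed.

(* The diagonal entries of A in the basis V are averages of its eigenvalues, with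
   the doubly stochastic weights (W k i)^2, W = Q^T V. *)
Lemma rsum_spectrum_le_diag n A Q V al : posdef n A -> spectral_decomp n A Q al ->
  orthogonal n V ->
  rsum n (fun k => g (al k)) <= rsum n (fun i => g (quad_form n A (fun p => V p i))).
Proof.
  intros HA HQ HV.
  destruct (orthogonal_change_basis (proj1 HQ) HV) as [HW HWt].
  apply (jensen_doubly_stochastic n (fun i k => mmul n (mtr Q) V k i ^ 2)).
  - apply (spectral_decomp_pos n A Q); assumption.
  - intros i Hi. apply posdef_quad_col; assumption.
  - intros i k _ _. apply pow2_ge_0.
  - intros i Hi. rewrite <- (orthogonal_col_sqr n _ i HW Hi). apply rsum_ext; intros; ring.
  - intros k Hk. rewrite <- (orthogonal_col_sqr n _ k HWt Hk). apply rsum_ext; intros.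
    unfold mtr. ring.
  - intros i Hi. rewrite (quad_form_col n A Q V al i Hi HQ). apply rsum_ext; intros; ring.
Qed.

Lemma rsum_spectrum_concave n A B t Q P V al be ga :
  posdef n A -> posdef n B -> 0 <= t <= 1 ->
  spectral_decomp n A Q al -> spectral_decomp n B P be ->
  spectral_decomp n (mcomb t A B) V ga ->
  t * rsum n (fun k => g (al k)) + (1 - t) * rsum n (fun k => g (be k))
  <= rsum n (fun k => g (ga k)).
Proof.
  intros HA HB Ht HQ HP HV.
  pose proof (rsum_spectrum_le_diag n A Q V al HA HQ (proj1 HV)) as JA.
  pose proof (rsum_spectrum_le_diag n B P V be HB HP (proj1 HV)) as JB.
  eapply Rle_trans.
  { apply Rplus_le_compat; apply Rmult_le_compat_l; [lra|exact JA|lra|exact JB]. }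
  rewrite <- !rsum_scal, <- rsum_plus. apply rsum_le. intros i Hi.
  rewrite <- (quad_form_eigvec n _ V ga i Hi HV), quad_form_comb.
  set (x := quad_form n A (fun p => V p i)). set (y := quad_form n B (fun p => V p i)).
  assert (Hx : 0 < x) by (apply posdef_quad_col; [|apply HV|]; assumption).
  assert (Hy : 0 < y) by (apply posdef_quad_col; [|apply HV|]; assumption).
  set (m := t * x + (1 - t) * y).
  assert (Hm : 0 <= m) by (unfold m; nra).
  pose proof (g_tangent m x Hm (Rlt_le _ _ Hx)). pose proof (g_tangent m y Hm (Rlt_le _ _ Hy)).
  assert (t * g x <= t * (g m + g' m * (x - m))) by (apply Rmult_le_compat_l; lra).
  assert ((1 - t) * g y <= (1 - t) * (g m + g' m * (y - m))) by (apply Rmult_le_compat_l; lra).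
  assert (t * (g m + g' m * (x - m)) + (1 - t) * (g m + g' m * (y - m)) = g m) by (unfold m; ring).
  lra.
Qed.

End TraceConcavity.

Section SlopeSums.
Variables (g : R -> R) (a c : R) (n : nat).
Hypotheses (Ha : 0 < a) (Hc : 0 < c) (Hg : has_slope g a c).

Lemma rsum_has_partial lam i : (i < n)%nat -> 0 <= lam i ->
  derivable_pt_lim (fun x => rsum n (fun k => g (upd lam i x k))) (lam i) (slope a c (lam i)).
Proof.
  intros Hi Hl.
  replace (fun x => rsum n (fun k => g (upd lam i x k)))
    with (fun x => (rsum n (fun k => g (lam k)) - g (lam i)) + g x)
    by (extensionality x; symmetry; apply rsum_comp_upd, Hi).
  replace (slope a c (lam i)) with (0 + slope a c (lam i)) by ring.
  apply derivable_pt_lim_plus; [apply derivable_pt_lim_const|apply Hg, Hl].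
Qed.

Lemma rsum_upd_lt lam i x y : (i < n)%nat -> 0 <= x -> x < y ->
  rsum n (fun k => g (upd lam i x k)) < rsum n (fun k => g (upd lam i y k)).
Proof.
  intros Hi Hx Hxy. rewrite !rsum_comp_upd by assumption.
  pose proof (has_slope_lt a c Ha Hc g Hg x y Hx Hxy). lra.
Qed.

Lemma ordered_nonneg lam : ordered n lam -> 0 <= lam 0%nat -> forall k, (k < n)%nat -> 0 <= lam k.
Proof. intros Ho H0 k Hk. pose proof (Ho 0%nat k ltac:(lia) Hk). lra. Qed.

Lemma rsum_ordered_bounds lam : (1 <= n)%nat -> ordered n lam -> 0 <= lam 0%nat ->
  INR n * g (lam 0%nat) <= rsum n (fun k => g (lam k)) <= INR n * g (lam (n - 1)%nat).
Proof.
  intros Hn Ho H0. pose proof (ordered_nonneg lam Ho H0) as Hnn.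
  split; rewrite <- rsum_const; apply rsum_le; intros k Hk;
    apply (has_slope_le a c Ha Hc g Hg); try apply Ho; try apply Hnn; lia.
Qed.

Lemma rsum_ellipticity mu1 mu2 : (1 <= n)%nat -> 0 < mu1 -> 0 < mu2 ->
  exists lo hi, 0 < lo /\ 0 < hi /\
    forall lam, Gamma_mu n mu1 mu2 lam ->
    forall d : nat -> R, (forall i, (i < n)%nat ->
      derivable_pt_lim (fun x => rsum n (fun k => g (upd lam i x k))) (lam i) (d i)) ->
      lo <= rsum n d <= hi /\ lo <= rsum n (fun i => d i * lam i ^ 2) <= hi.
Proof.
  intros Hn H1 H2.
  assert (P1 : 0 < slope a c mu1) by (apply slope_pos; lra).
  assert (P2 : 0 < slope a c mu2 * mu2 ^ 2)
    by (apply Rmult_lt_0_compat; [apply slope_pos|]; nra).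
  assert (Hnpos : 0 < INR n) by (apply lt_0_INR; lia).
  exists (Rmin (slope a c mu1) (slope a c mu2 * mu2 ^ 2)), (INR n * c).
  split; [apply Rmin_glb_lt; assumption|]. split; [nra|].
  intros lam [Ho [H0 [Hm1 Hm2]]] d Hd.
  pose proof (ordered_nonneg lam Ho H0) as Hnn.
  assert (Deq : forall i, (i < n)%nat -> d i = slope a c (lam i)).
  { intros i Hi. eapply uniqueness_limite; [apply Hd, Hi|apply rsum_has_partial; auto]. }
  pose proof (Rmin_l (slope a c mu1) (slope a c mu2 * mu2 ^ 2)).
  pose proof (Rmin_r (slope a c mu1) (slope a c mu2 * mu2 ^ 2)).
  split; split.
  - apply Rle_trans with (d 0%nat).
    + rewrite Deq by lia. pose proof (slope_antitone a c Ha Hc (lam 0%nat) mu1). lra.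
    + apply rsum_ge_term; [|lia]. intros k Hk. rewrite Deq by assumption.
      left; apply slope_pos; auto.
  - rewrite <- rsum_const. apply rsum_le. intros k Hk. rewrite Deq by assumption.
    apply slope_le; auto.
  - apply Rle_trans with (d (n - 1)%nat * lam (n - 1)%nat ^ 2).
    + rewrite Deq by lia. pose proof (slope_mul_sqr_mono a c Ha Hc mu2 (lam (n - 1)%nat)). lra.
    + apply (rsum_ge_term n (fun i => d i * lam i ^ 2)); [|lia]. intros k Hk.
      rewrite Deq by assumption. pose proof (slope_pos a c Ha Hc (lam k) (Hnn k Hk)).
      pose proof (pow2_ge_0 (lam k)). nra.
  - rewrite <- rsum_const. apply rsum_le. intros k Hk. rewrite Deq by assumption.
    apply slope_mul_sqr_le; auto.
Qed.

Lemma rsum_growth : (1 <= n)%nat ->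
  exists f1 f2 : R -> R,
    (forall x y, 0 < x -> x < y -> f1 x < f1 y) /\
    (forall x y, 0 < x -> x < y -> f2 x < f2 y) /\
    (forall lam, ordered n lam -> 0 <= lam 0%nat ->
       f1 (lam 0%nat) <= rsum n (fun k => g (lam k)) <= f2 (lam (n - 1)%nat)) /\
    (forall Phi Psi,
       (exists lam, ordered n lam /\ (forall i, (i < n)%nat -> 0 < lam i) /\
          Phi = rsum n (fun k => g (lam k))) ->
       (exists lam, ordered n lam /\ (forall i, (i < n)%nat -> 0 < lam i) /\
          Psi = rsum n (fun k => g (lam k))) ->
       exists t1 t2, 0 < t1 /\ 0 < t2 /\
         (forall t, 0 < t -> f1 t <= Phi -> t <= t1) /\
         (forall t, 0 < t -> Psi <= f2 t -> t2 <= t)).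
Proof.
  intros Hn. assert (Hnpos : 0 < INR n) by (apply lt_0_INR; lia).
  assert (Mono : forall x y, 0 < x -> x < y -> INR n * g x < INR n * g y).
  { intros x y Hx Hxy. apply Rmult_lt_compat_l; [assumption|].
    apply (has_slope_lt a c Ha Hc g Hg); lra. }
  exists (fun x => INR n * g x), (fun x => INR n * g x).
  split; [exact Mono|]. split; [exact Mono|]. split.
  { intros lam Ho H0. apply rsum_ordered_bounds; assumption. }
  intros Phi Psi [l1 [Ho1 [Hp1 ->]]] [l2 [Ho2 [Hp2 ->]]].
  pose proof (Hp1 0%nat ltac:(lia)). pose proof (Hp1 (n - 1)%nat ltac:(lia)).
  pose proof (Hp2 0%nat ltac:(lia)).
  pose proof (rsum_ordered_bounds l1 Hn Ho1 ltac:(lra)) as B1.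
  pose proof (rsum_ordered_bounds l2 Hn Ho2 ltac:(lra)) as B2.
  exists (l1 (n - 1)%nat), (l2 0%nat). do 2 (split; [assumption|]). split.
  - intros t Ht Hle. apply Rnot_lt_le. intros Hlt.
    pose proof (Mono (l1 (n - 1)%nat) t ltac:(assumption) Hlt). lra.
  - intros t Ht Hle. apply Rnot_lt_le. intros Hlt.
    pose proof (Mono t (l2 0%nat) Ht Hlt). lra.
Qed.

Lemma rsum_eigvals_concave A B t lamA lamB lamC :
  posdef n A -> posdef n B -> 0 <= t <= 1 ->
  eigvals n A lamA -> eigvals n B lamB -> eigvals n (mcomb t A B) lamC ->
  t * rsum n (fun k => g (lamA k)) + (1 - t) * rsum n (fun k => g (lamB k))
  <= rsum n (fun k => g (lamC k)).
Proof.
  intros HA HB Ht [_ [Q HQ]] [_ [P HP]] [_ [V HV]].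
  apply (rsum_spectrum_concave g (slope a c) (has_slope_tangent a c Ha Hc g Hg) n A B t Q P V);
    assumption.
Qed.

Lemma rsum_comp_inv lam : (forall k, (k < n)%nat -> 0 < lam k) ->
  rsum n (fun k => g (/ lam k)) = INR n * (2 * g 1) - rsum n (fun k => g (lam k)).
Proof.
  intros Hl. rewrite (rsum_ext _ _ (fun k => 2 * g 1 + (-1) * g (lam k))).
  - rewrite rsum_plus, rsum_const, rsum_scal. ring.
  - intros k Hk. pose proof (has_slope_add_inv a c Ha g Hg (lam k) (Hl k Hk)). lra.
Qed.

Lemma inv_eigvals_pos A Ai Q lam : posdef n A -> spectral_decomp n Ai Q lam -> minv n A Ai ->
  spectral_decomp n A Q (fun k => / lam k) /\ forall k, (k < n)%nat -> 0 < lam k.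
Proof.
  intros HA HAi Hinv. pose proof (spectral_decomp_inv HAi Hinv) as HA'.
  split; [exact HA'|]. intros k Hk. rewrite <- (Rinv_inv (lam k)).
  apply Rinv_0_lt_compat, (spectral_decomp_pos n A Q _ HA HA' k Hk).
Qed.

Lemma rsum_inv_eigvals_concave A B t Ai Bi Ci lamA lamB lamC :
  posdef n A -> posdef n B -> 0 <= t <= 1 ->
  minv n A Ai -> minv n B Bi -> minv n (mcomb t A B) Ci ->
  eigvals n Ai lamA -> eigvals n Bi lamB -> eigvals n Ci lamC ->
  t * (- rsum n (fun k => g (lamA k))) + (1 - t) * (- rsum n (fun k => g (lamB k)))
  <= - rsum n (fun k => g (lamC k)).
Proof.
  intros HA HB Ht HAi HBi HCi [_ [Q HQ]] [_ [P HP]] [_ [V HV]].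
  pose proof (posdef_comb n t A B HA HB Ht) as HC.
  destruct (inv_eigvals_pos A Ai Q lamA HA HQ HAi) as [HA' pA].
  destruct (inv_eigvals_pos B Bi P lamB HB HP HBi) as [HB' pB].
  destruct (inv_eigvals_pos _ Ci V lamC HC HV HCi) as [HC' pC].
  pose proof (rsum_spectrum_concave g (slope a c) (has_slope_tangent a c Ha Hc g Hg)
                n A B t Q P V _ _ _ HA HB Ht HA' HB' HC') as K.
  cbv beta in K. rewrite !rsum_comp_inv in K by assumption. lra.
Qed.

End SlopeSums.

Theorem lemma3p2 (tau : R) (n : nat)
  (Htau : 0 < tau < PI / 2) (Htau4 : tau <> PI / 4) (Hn : (1 <= n)%nat) :
  (* (i) monotonicity (positive partial derivatives) and symmetry *)
  ((forall lam : nat -> R, (forall j, (j < n)%nat -> 0 <= lam j) ->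
      forall i, (i < n)%nat ->
        (exists d, partial_F tau n lam i d /\ 0 < d) /\
        (forall x y, 0 <= x -> x < y ->
           F_tau tau n (upd lam i x) < F_tau tau n (upd lam i y))) /\
   (forall lam i j, (i < n)%nat -> (j < n)%nat ->
      F_tau tau n (swap lam i j) = F_tau tau n lam)) /\
  (* (ii) uniform ellipticity-type bounds on Gamma^+_{]mu1,mu2[} *)
  (forall mu1 mu2, 0 < mu1 -> 0 < mu2 ->
     exists lo hi, 0 < lo /\ 0 < hi /\
       forall lam, Gamma_mu n mu1 mu2 lam ->
       forall d : nat -> R, (forall i, (i < n)%nat -> partial_F tau n lam i (d i)) ->
         lo <= rsum n d <= hi /\
         lo <= rsum n (fun i => d i * lam i ^ 2) <= hi) /\
  (* (iii) concavity of F_tau(A) and F_tau^*(A) = - F_tau(A^{-1}) on Gamma_+ *)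
  (forall A B t lamA lamB lamC, posdef n A -> posdef n B -> 0 <= t <= 1 ->
     eigvals n A lamA -> eigvals n B lamB -> eigvals n (mcomb t A B) lamC ->
     t * F_tau tau n lamA + (1 - t) * F_tau tau n lamB <= F_tau tau n lamC) /\
  (forall A B t Ai Bi Ci lamA lamB lamC, posdef n A -> posdef n B -> 0 <= t <= 1 ->
     minv n A Ai -> minv n B Bi -> minv n (mcomb t A B) Ci ->
     eigvals n Ai lamA -> eigvals n Bi lamB -> eigvals n Ci lamC ->
     t * (- F_tau tau n lamA) + (1 - t) * (- F_tau tau n lamB) <= - F_tau tau n lamC) /\
  (* (iv) *)
  (exists f1 f2 : R -> R,
     (forall x y, 0 < x -> x < y -> f1 x < f1 y) /\
     (forall x y, 0 < x -> x < y -> f2 x < f2 y) /\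
     (forall lam, ordered n lam -> 0 <= lam 0%nat ->
        f1 (lam 0%nat) <= F_tau tau n lam <= f2 (lam (n - 1)%nat)) /\
     (forall Phi Psi, L_set tau n Phi -> L_set tau n Psi ->
        exists t1 t2, 0 < t1 /\ 0 < t2 /\
          (forall t, 0 < t -> f1 t <= Phi -> t <= t1) /\
          (forall t, 0 < t -> Psi <= f2 t -> t2 <= t))).
Proof.
  destruct (g_tau_has_slope tau Htau Htau4) as [c [Hc Hg]].
  pose proof (a_tau_pos tau Htau) as Ha.
  split; [split|split; [|split; [|split]]].
  - intros lam Hlam i Hi. split.
    + exists (slope (a_tau tau) c (lam i)).
      split; [apply rsum_has_partial|apply slope_pos]; auto.
    + intros x y Hx Hxy. apply rsum_upd_lt with (a := a_tau tau) (c := c); assumption.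
  - intros lam i j Hi Hj. apply rsum_comp_swap; assumption.
  - intros mu1 mu2. apply rsum_ellipticity with (a := a_tau tau) (c := c); assumption.
  - apply rsum_eigvals_concave with (a := a_tau tau) (c := c); assumption.
  - apply rsum_inv_eigvals_concave with (a := a_tau tau) (c := c); assumption.
  - apply rsum_growth with (a := a_tau tau) (c := c); assumption.
Qed.
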